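(* Assume $\rho_{i,j}\ge 0$ for all cells, and consider the forward Euler finite-volume update of the intensity \[ \rho^{+}_{i,j} =\rho_{i,j} -\Delta z\left( \frac{F^x_{i+\frac12,j}-F^x_{i-\frac12,j}}{\Delta x} +\frac{F^y_{i,j+\frac12}-F^y_{i,j-\frac12}}{\Delta y} \right), \] with boundary face fluxes set to zero, $F^x_{\frac12,j}=F^x_{N_x+\frac12,j}=0$, $F^y_{i,\frac12}=F^y_{i,N_y+\frac12}=0$, where the interior fluxes are Rusanov (local Lax--Friedrichs) fluxes \[ F^x_{i+\frac12,j} = \tfrac12\big(\rho_{i,j}+\rho_{i+1,j}\big)\left(v^x_{i+\frac12,j} + \omega^x_{i+\frac12,j} \right) -\tfrac12 \left( a^x_{i+\frac12,j} + b^x_{i+\frac12,j} \right)\big(\rho_{i+1,j}-\rho_{i,j}\big), \] (and $F^y_{i,j+\frac12}$ defined analogously in the $y$-direction) with wave-speed parameters chosen as $ a^x_{i+\frac12,j} := |v^x_{i+\frac12,j}|,\ a^y_{i,j+\frac12} := |v^y_{i,j+\frac12}|, $ and polarization gradient parameters $ b^x_{i+\frac12,j} := |\omega^x_{i+\frac12,j}|,\ b^y_{i,j+\frac12} := |\omega^y_{i,j+\frac12}|. $ If the $z$-step satisfies the global CFL condition \[ \Delta z\left( \frac{\max_{i,j} c^x_{i+\frac12,j}}{\Delta x} + \frac{\max_{i,j} c^y_{i,j+\frac12}}{\Delta y} \right)\le \frac{1}{2}, \] where $c^x_{i+\frac12,j} = a^x_{i+\frac12,j}+b^x_{i+\frac12,j}$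 and $c^y_{i,j+\frac12} = a^y_{i,j+\frac12}+b^y_{i,j+\frac12}$, then the forward Euler update yields $\rho^{+}_{i,j}\ge 0$ for all cells. Consequently, the third-order SSP Runge--Kutta scheme (SSP-RK3) preserves nonnegativity under the same CFL condition.
   Context: Discretization of the intensity equation $\partial_z \rho + \frac{1}{k_0}\nabla\cdot(\rho(\nabla\phi+\nabla\gamma))=0$ on a uniform Cartesian grid of $\Omega=(-L,L)^2$ with cell centers $x_i=-L+(i-\tfrac12)\Delta x$, $y_j=-L+(j-\tfrac12)\Delta y$, $i=1,\dots,N_x$, $j=1,\dots,N_y$, $\Delta x=2L/N_x$, $\Delta y=2L/N_y$; $k_0>0$ is the wavenumber. Cell-centered velocities and polarization gradients are $v^x_{i,j}=\frac1{k_0}(D_x^0\phi)_{i,j}$, $\omega^x_{i,j}=\frac1{k_0}(D_x^0\gamma)_{i,j}$ (centered differences with Neumann ghost-cell reflection), and face values are arithmetic averages $v^x_{i+\frac12,j}=\tfrac12(v^x_{i,j}+v^x_{i+1,j})$, $\omega^x_{i+\frac12,j}=\tfrac12(\omega^x_{i,j}+\omega^x_{i+1,j})$, analogously in $y$. SSP-RK3 for $U'=\mathcal R(U)$ is $U^{(1)}=U^n+\Delta z\mathcal R(U^n)$, $U^{(2)}=\tfrac34U^n+\tfrac14(U^{(1)}+\Delta z\mathcal R(U^{(1)}))$, $U^{n+1}=\tfrac13U^n+\tfrac23(U^{(2)}+\Delta z\mathcal R(U^{(2)}))$, i.e. a convex combination of forward Euler steps. *)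

(* R : realFieldType.  Cells are 0-based: paper cell (i,j),
   1<=i<=Nx, is index (i-1,j-1) here, with 0 <= i < Nx, 0 <= j < Ny. *)
From mathcomp Require Import all_boot all_order all_algebra.
Set Implicit Arguments. Unset Strict Implicit. Unset Printing Implicit Defensive.
Import Order.TTheory GRing.Theory Num.Theory.
Local Open Scope ring_scope.

Section Scheme.
Variables (R : realFieldType) (L k0 : R) (Nx Ny : nat).

Definition grid := nat -> nat -> R.

Definition dx : R := 2 * L / Nx%:R.
Definition dy : R := 2 * L / Ny%:R.

(* Neumann ghost-cell reflection: ghost value = adjacent interior value. *)
Definition xm (u : grid) i j : R := if i == 0%N then u 0%N j else u i.-1 j.
Definition xp (u : grid) i j : R := if (i.+1 < Nx)%N then u i.+1 j else u i j.
Definition ym (u : grid) i j : R := if j == 0%N then u i 0%N else u i j.-1.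
Definition yp (u : grid) i j : R := if (j.+1 < Ny)%N then u i j.+1 else u i j.

Definition Dx0 (u : grid) : grid := fun i j => (xp u i j - xm u i j) / (2 * dx).
Definition Dy0 (u : grid) : grid := fun i j => (yp u i j - ym u i j) / (2 * dy).

Definition cvx (phi : grid) : grid := fun i j => k0^-1 * Dx0 phi i j.
Definition cvy (phi : grid) : grid := fun i j => k0^-1 * Dy0 phi i j.

(* face values: fx u i j is the value at face (i+1/2, j) in 0-based indexing,
   i.e. between cells i and i+1 *)
Definition facex (u : grid) : grid := fun i j => (u i j + u i.+1 j) / 2.
Definition facey (u : grid) : grid := fun i j => (u i j + u i j.+1) / 2.

Definition vxf phi := facex (cvx phi).
Definition vyf phi := facey (cvy phi).
Definition wxf gam := facex (cvx gam).
Definition wyf gam := facey (cvy gam).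

Definition ax phi : grid := fun i j => `|vxf phi i j|.
Definition ay phi : grid := fun i j => `|vyf phi i j|.
Definition bx gam : grid := fun i j => `|wxf gam i j|.
Definition by_ gam : grid := fun i j => `|wyf gam i j|.
Definition cx phi gam : grid := fun i j => ax phi i j + bx gam i j.
Definition cy phi gam : grid := fun i j => ay phi i j + by_ gam i j.

Definition Fx (phi gam rho : grid) : grid := fun i j =>
  if (i.+1 < Nx)%N then
    (rho i j + rho i.+1 j) / 2 * (vxf phi i j + wxf gam i j)
    - (ax phi i j + bx gam i j) / 2 * (rho i.+1 j - rho i j)
  else 0.
Definition Fy (phi gam rho : grid) : grid := fun i j =>
  if (j.+1 < Ny)%N then
    (rho i j + rho i j.+1) / 2 * (vyf phi i j + wyf gam i j)
    - (ay phi i j + by_ gam i j) / 2 * (rho i j.+1 - rho i j)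
  else 0.

Definition FxL phi gam rho : grid := fun i j =>
  if i == 0%N then 0 else Fx phi gam rho i.-1 j.
Definition FyL phi gam rho : grid := fun i j =>
  if j == 0%N then 0 else Fy phi gam rho i j.-1.

Definition Rop phi gam (rho : grid) : grid := fun i j =>
  - ((Fx phi gam rho i j - FxL phi gam rho i j) / dx
     + (Fy phi gam rho i j - FyL phi gam rho i j) / dy).

Definition euler phi gam (dz : R) (rho : grid) : grid := fun i j =>
  rho i j + dz * Rop phi gam rho i j.

Definition ssprk3 phi gam (dz : R) (rho : grid) : grid :=
  let u1 := euler phi gam dz rho in
  let u2 := fun i j => 3/4 * rho i j + 1/4 * euler phi gam dz u1 i j in
  fun i j => 1/3 * rho i j + 2/3 * euler phi gam dz u2 i j.

(* maxima of c over interior faces: i < Nx-1 (resp. j < Ny-1) *)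
Definition cxmax phi gam : R :=
  \big[Num.max/0]_(i < Nx.-1) \big[Num.max/0]_(j < Ny) cx phi gam i j.
Definition cymax phi gam : R :=
  \big[Num.max/0]_(i < Nx) \big[Num.max/0]_(j < Ny.-1) cy phi gam i j.

Definition nonneg (rho : grid) : Prop :=
  forall i j, (i < Nx)%N -> (j < Ny)%N -> 0 <= rho i j.

End Scheme.

(** The Rusanov flux splits as [F = r0 (c + u)/2 - r1 (c - u)/2], with both
    coefficients nonnegative since [|v + w| <= |v| + |w| = c].  So the flux
    leaving a cell through its right face is at most [rho cmax], and so is the
    flux leaving it through its left face; the forward Euler update is then at
    least [rho (1 - 2 dz (cxmax / dx + cymax / dy))], which the CFL condition
    keeps nonnegative.  The [y]-direction is the [x]-direction of the
    transposed grid, and SSP-RK3 is a convex combination of Euler steps. *)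

From mathcomp Require Import all_boot all_order all_algebra.
From mathcomp Require Import ring lra.
Set Implicit Arguments. Unset Strict Implicit. Unset Printing Implicit Defensive.
Import Order.TTheory GRing.Theory Num.Theory.
Local Open Scope ring_scope.

Section RusanovFlux.
Variable R : realFieldType.

Definition rusanov (r0 r1 u c : R) : R := (r0 + r1) / 2 * u - c / 2 * (r1 - r0).

Lemma rusanovE r0 r1 u c :
  rusanov r0 r1 u c = r0 * ((c + u) / 2) - r1 * ((c - u) / 2).
Proof. by rewrite /rusanov; field. Qed.

Section Monotone.
Variables (r0 r1 u c : R).
Hypotheses (r0_ge0 : 0 <= r0) (r1_ge0 : 0 <= r1) (u_le_c : `|u| <= c).

Let u_bounds : - c <= u <= c.
Proof. by rewrite -ler_norml. Qed.

Let upwind_ge0 : 0 <= r0 * ((c + u) / 2) /\ 0 <= r1 * ((c - u) / 2).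
Proof. by have /andP [? ?] := u_bounds; split; apply: mulr_ge0 => //; lra. Qed.

Lemma rusanov_le : rusanov r0 r1 u c <= r0 * c.
Proof.
have [_ ?] := upwind_ge0.
have : r0 * ((c + u) / 2) <= r0 * c.
  by have /andP [? ?] := u_bounds; apply: ler_wpM2l => //; lra.
by rewrite rusanovE; lra.
Qed.

Lemma oppr_rusanov_le : - rusanov r0 r1 u c <= r1 * c.
Proof.
have [? _] := upwind_ge0.
have : r1 * ((c - u) / 2) <= r1 * c.
  by have /andP [? ?] := u_bounds; apply: ler_wpM2l => //; lra.
by rewrite rusanovE; lra.
Qed.

End Monotone.

Lemma euler_cell_ge0 (r dz hx hy a b Fr Fl Gr Gl : R) :
  0 < hx -> 0 < hy -> 0 <= dz -> 0 <= r ->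
  Fr <= r * a -> - Fl <= r * a -> Gr <= r * b -> - Gl <= r * b ->
  dz * (a / hx + b / hy) <= 1/2 ->
  0 <= r + dz * - ((Fr - Fl) / hx + (Gr - Gl) / hy).
Proof.
move=> hx_gt0 hy_gt0 dz_ge0 r_ge0 Fr_le Fl_le Gr_le Gl_le cfl.
have Fx_le : (Fr - Fl) / hx <= 2 * r * (a / hx).
  by rewrite mulrA; apply: ler_wpM2r; [rewrite invr_ge0 ltW | lra].
have Fy_le : (Gr - Gl) / hy <= 2 * r * (b / hy).
  by rewrite mulrA; apply: ler_wpM2r; [rewrite invr_ge0 ltW | lra].
have : dz * ((Fr - Fl) / hx + (Gr - Gl) / hy)
       <= dz * (2 * r * (a / hx) + 2 * r * (b / hy)).
  by apply: ler_wpM2l => //; lra.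
have -> : dz * (2 * r * (a / hx) + 2 * r * (b / hy))
          = 2 * r * (dz * (a / hx + b / hy)) by ring.
have : 2 * r * (dz * (a / hx + b / hy)) <= 2 * r * (1/2).
  by apply: ler_wpM2l => //; lra.
lra.
Qed.

End RusanovFlux.

Lemma le_bigmax2 (R : realFieldType) (N M : nat) (F : nat -> nat -> R) i j :
  (i < N)%N -> (j < M)%N ->
  F i j <= \big[Num.max/0]_(i < N) \big[Num.max/0]_(j < M) F i j.
Proof.
move=> lt_iN lt_jM; apply: le_trans (le_bigmax _ _ (Ordinal lt_iN)).
exact: (le_bigmax _ (fun j : 'I_M => F i j) (Ordinal lt_jM)).
Qed.

Section XFluxBounds.
Variables (R : realFieldType) (L k0 : R) (N M : nat) (phi gam rho : grid R).
Variable cm : R.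
Hypothesis cx_le : forall i j, (i < N.-1)%N -> (j < M)%N -> cx L k0 N phi gam i j <= cm.
Hypothesis cm_ge0 : 0 <= cm.
Hypothesis rho_ge0 : nonneg N M rho.

Let cx_interior_le i j : (i.+1 < N)%N -> (j < M)%N -> cx L k0 N phi gam i j <= cm.
Proof. by move=> lt_i1N; apply: cx_le; rewrite -ltnS prednK // (leq_ltn_trans _ lt_i1N). Qed.

Lemma Fx_interior i j : (i.+1 < N)%N ->
  Fx L k0 N phi gam rho i j
  = rusanov (rho i j) (rho i.+1 j) (vxf L k0 N phi i j + wxf L k0 N gam i j)
            (ax L k0 N phi i j + bx L k0 N gam i j).
Proof. by rewrite /Fx => ->. Qed.

Let Fx_interior_bounds i j : (i.+1 < N)%N -> (j < M)%N ->
  Fx L k0 N phi gam rho i j <= rho i j * cm /\ - Fx L k0 N phi gam rho i j <= rho i.+1 j * cm.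
Proof.
move=> lt_i1N lt_jM; have lt_iN := ltnW lt_i1N.
have r0_ge0 := rho_ge0 lt_iN lt_jM; have r1_ge0 := rho_ge0 lt_i1N lt_jM.
have u_le_c := ler_normD (vxf L k0 N phi i j) (wxf L k0 N gam i j).
have c_le_cm := cx_interior_le lt_i1N lt_jM.
rewrite Fx_interior //; split.
- apply: le_trans (rusanov_le r0_ge0 r1_ge0 u_le_c) _.
  exact: ler_wpM2l.
- apply: le_trans (oppr_rusanov_le r0_ge0 r1_ge0 u_le_c) _.
  exact: ler_wpM2l.
Qed.

Lemma Fx_le i j : (i < N)%N -> (j < M)%N -> Fx L k0 N phi gam rho i j <= rho i j * cm.
Proof.
move=> lt_iN lt_jM; case: (ltnP i.+1 N) => [lt_i1N | le_Ni1].
  by have [] := Fx_interior_bounds lt_i1N lt_jM.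
by rewrite /Fx ltnNge le_Ni1 mulr_ge0 ?rho_ge0.
Qed.

Lemma oppr_FxL_le i j : (i < N)%N -> (j < M)%N -> - FxL L k0 N phi gam rho i j <= rho i j * cm.
Proof.
rewrite /FxL; case: i => [|i] lt_iN lt_jM /=.
  by rewrite oppr0 mulr_ge0 ?rho_ge0.
by have [] := Fx_interior_bounds lt_iN lt_jM.
Qed.

End XFluxBounds.

Section Transpose.
Variables (R : realFieldType) (L k0 : R) (Nx Ny : nat) (phi gam rho : grid R).

Definition transpose (u : grid R) : grid R := fun i j => u j i.

Lemma cy_transpose i j :
  cy L k0 Ny phi gam i j = cx L k0 Ny (transpose phi) (transpose gam) j i.
Proof. by []. Qed.

Lemma Fy_transpose i j :
  Fy L k0 Ny phi gam rho i j
  = Fx L k0 Ny (transpose phi) (transpose gam) (transpose rho) j i.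
Proof. by []. Qed.

Lemma FyL_transpose i j :
  FyL L k0 Ny phi gam rho i j
  = FxL L k0 Ny (transpose phi) (transpose gam) (transpose rho) j i.
Proof. by []. Qed.

Lemma nonneg_transpose : nonneg Nx Ny rho -> nonneg Ny Nx (transpose rho).
Proof. by move=> rho_ge0 j i lt_jNy lt_iNx; apply: rho_ge0. Qed.

End Transpose.

Section EulerStep.
Variables (R : realFieldType) (L k0 dz : R) (Nx Ny : nat) (phi gam : grid R).
Hypotheses (L_gt0 : 0 < L) (dz_gt0 : 0 < dz) (Nx_gt0 : (0 < Nx)%N) (Ny_gt0 : (0 < Ny)%N).

Lemma dx_gt0 (N : nat) : (0 < N)%N -> 0 < dx L N.
Proof. by move=> N_gt0; rewrite /dx divr_gt0 ?mulr_gt0 ?ltr0n. Qed.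

Lemma euler_nonneg rho : nonneg Nx Ny rho ->
  dz * (cxmax L k0 Nx Ny phi gam / dx L Nx + cymax L k0 Nx Ny phi gam / dy L Ny) <= 1/2 ->
  nonneg Nx Ny (euler L k0 Nx Ny phi gam dz rho).
Proof.
move=> rho_ge0 cfl i j lt_iNx lt_jNy.
have cx_le i' j' : (i' < Nx.-1)%N -> (j' < Ny)%N ->
    cx L k0 Nx phi gam i' j' <= cxmax L k0 Nx Ny phi gam.
  exact: (le_bigmax2 (cx L k0 Nx phi gam)).
have cy_le j' i' : (j' < Ny.-1)%N -> (i' < Nx)%N ->
    cx L k0 Ny (transpose phi) (transpose gam) j' i' <= cymax L k0 Nx Ny phi gam.
  by move=> *; rewrite -cy_transpose; apply: (le_bigmax2 (cy L k0 Ny phi gam)).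
have cxmax_ge0 : 0 <= cxmax L k0 Nx Ny phi gam by apply: bigmax_ge_id.
have cymax_ge0 : 0 <= cymax L k0 Nx Ny phi gam by apply: bigmax_ge_id.
have rhoT_ge0 := nonneg_transpose rho_ge0.
have dy_gt0 : 0 < dy L Ny := dx_gt0 Ny_gt0.
have Fx_bound := Fx_le cx_le cxmax_ge0 rho_ge0 lt_iNx lt_jNy.
have FxL_bound := oppr_FxL_le cx_le cxmax_ge0 rho_ge0 lt_iNx lt_jNy.
have Fy_bound := Fx_le cy_le cymax_ge0 rhoT_ge0 lt_jNy lt_iNx.
have FyL_bound := oppr_FxL_le cy_le cymax_ge0 rhoT_ge0 lt_jNy lt_iNx.
rewrite -Fy_transpose in Fy_bound; rewrite -FyL_transpose in FyL_bound.
exact: euler_cell_ge0 (dx_gt0 Nx_gt0) dy_gt0 (ltW dz_gt0) (rho_ge0 _ _ lt_iNx lt_jNy)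
  Fx_bound FxL_bound Fy_bound FyL_bound cfl.
Qed.

End EulerStep.

Lemma nonneg_convex (R : realFieldType) (Nx Ny : nat) (a b : R) (u v : grid R) :
  0 <= a -> 0 <= b -> nonneg Nx Ny u -> nonneg Nx Ny v ->
  nonneg Nx Ny (fun i j => a * u i j + b * v i j).
Proof.
by move=> a_ge0 b_ge0 u_ge0 v_ge0 i j lt_iNx lt_jNy;
  rewrite addr_ge0 ?mulr_ge0 ?u_ge0 ?v_ge0.
Qed.

Theorem proposition4p3 (R : realFieldType) (L k0 dz : R) (Nx Ny : nat)
  (phi gam rho : grid R) :
  0 < L -> 0 < k0 -> 0 < dz -> (0 < Nx)%N -> (0 < Ny)%N ->
  nonneg Nx Ny rho ->
  dz * (cxmax L k0 Nx Ny phi gam / dx L Nx + cymax L k0 Nx Ny phi gam / dy L Ny)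
    <= 1/2 ->
  nonneg Nx Ny (euler L k0 Nx Ny phi gam dz rho) /\
  nonneg Nx Ny (ssprk3 L k0 Nx Ny phi gam dz rho).
Proof.
move=> L_gt0 _ dz_gt0 Nx_gt0 Ny_gt0 rho_ge0 cfl.
have step u : nonneg Nx Ny u -> nonneg Nx Ny (euler L k0 Nx Ny phi gam dz u).
  by move=> u_ge0; apply: euler_nonneg.
have u1_ge0 := step _ rho_ge0.
have u2_ge0 : nonneg Nx Ny (fun i j => 3/4 * rho i j + 1/4 * euler L k0 Nx Ny phi gam dz
                                         (euler L k0 Nx Ny phi gam dz rho) i j).
  by apply: nonneg_convex rho_ge0 (step _ u1_ge0); lra.
split=> //; rewrite /ssprk3.
by apply: nonneg_convex rho_ge0 (step _ u2_ge0); lra.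
Qed.
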